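(* Fix $\pi_1,\pi_1'\in(0,1)$ and set $\pi_2=1-\pi_1$, $\pi_2'=1-\pi_1'$. For real numbers $\mu_1<\mu_2$ and $\sigma>0$, define the densities on $\mathbb{R}$ $$p(x)=\pi_1\mathcal{N}(x;\mu_1,\sigma^2)+\pi_2\mathcal{N}(x;\mu_2,\sigma^2),\qquad p'(x)=\pi_1'\mathcal{N}(x;\mu_1,\sigma^2)+\pi_2'\mathcal{N}(x;\mu_2,\sigma^2),$$ which differ only in their mixing proportions. Fix $\delta\neq 0$ and put $x=\frac{\mu_1+\mu_2}{2}+\delta$. Then the dependence of the score $\nabla_x\log p(x)$ on the mixing proportion vanishes as $\frac{\mu_1-\mu_2}{\sigma^2}\to-\infty$: for every $\varepsilon>0$ there is $K>0$ such that for all $\mu_1<\mu_2$ and $\sigma>0$ with $\frac{\mu_1-\mu_2}{\sigma^2}<-K$, $$\Bigl|\nabla_x\log p(x)-\nabla_x\log p'(x)\Bigr|<\varepsilon .$$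
   Context: $\mathcal{N}(x;\mu,\sigma^2)$ denotes the Gaussian density with mean $\mu$ and variance $\sigma^2$. The score of a density $p$ on $\mathbb{R}$ is $\nabla_x\log p(x)$, the derivative with respect to $x$ (not with respect to parameters). *)

From Stdlib Require Import Reals Lra.
From Coquelicot Require Import Coquelicot.
Open Scope R_scope.

Definition gauss (x mu s2 : R) : R :=
  / sqrt (2 * PI * s2) * exp (- (x - mu) ^ 2 / (2 * s2)).

Definition mix2 (pi1 mu1 mu2 sigma x : R) : R :=
  pi1 * gauss x mu1 (sigma ^ 2) + (1 - pi1) * gauss x mu2 (sigma ^ 2).

Definition score (p : R -> R) (x : R) : R := Derive (fun y => ln (p y)) x.

From Stdlib Require Import Reals Lra.
From Coquelicot Require Import Coquelicot.
Open Scope R_scope.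

(* The score of the mixture at x is the score of the second component minus
   r (mu2 - mu1) / sigma^2, where r is the posterior probability of the first
   component.  With t = (mu2 - mu1) / sigma^2 and x = (mu1 + mu2) / 2 + delta, the
   likelihood ratio of the two components at x is exp (t delta), so r depends on the
   mixing proportion only through a logistic function of t delta.  As t -> +oo the
   posteriors for both proportions converge to the same limit (0 or 1, according to
   the sign of delta) at rate exp (- t |delta|), which beats the factor t. *)

Lemma gauss_pos (x mu s2 : R) : 0 < s2 -> 0 < gauss x mu s2.
Proof.
  intros Hs2. unfold gauss. apply Rmult_lt_0_compat; [|apply exp_pos].
  apply Rinv_0_lt_compat, sqrt_lt_R0. pose proof PI_RGT_0. nra.
Qed.

Lemma is_derive_gauss (x mu s2 : R) : s2 <> 0 ->
  is_derive (fun y => gauss y mu s2) x (- (x - mu) / s2 * gauss x mu s2).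
Proof.
  intros Hs2. unfold gauss. auto_derive; [easy|].
  replace (- ((x + - mu) * ((x + - mu) * 1)) * / (2 * s2))
    with (- (x - mu) ^ 2 / (2 * s2)) by (field; exact Hs2).
  replace (- (1 * ((1 + 1) * ((x + - mu) * 1))) * / (2 * s2))
    with (- (x - mu) / s2) by (field; exact Hs2).
  ring.
Qed.

Lemma gauss_ratio (x mu1 mu2 s2 : R) : s2 <> 0 ->
  gauss x mu2 s2 = gauss x mu1 s2 * exp ((mu2 - mu1) / s2 * (x - (mu1 + mu2) / 2)).
Proof.
  intros Hs2. unfold gauss. rewrite (Rmult_assoc (/ sqrt _)), <- exp_plus.
  do 2 f_equal. field. exact Hs2.
Qed.

Lemma score_eq_derive_div (f : R -> R) (x df : R) :
  0 < f x -> is_derive f x df -> score f x = df / f x.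
Proof.
  intros Hfx Hdf. apply is_derive_unique.
  exact (is_derive_comp ln f x (/ f x) df (is_derive_ln _ Hfx) Hdf).
Qed.

Lemma is_derive_mix2 (p mu1 mu2 sigma x : R) : sigma <> 0 ->
  is_derive (mix2 p mu1 mu2 sigma) x
    (p * (- (x - mu1) / sigma ^ 2 * gauss x mu1 (sigma ^ 2))
     + (1 - p) * (- (x - mu2) / sigma ^ 2 * gauss x mu2 (sigma ^ 2))).
Proof.
  intros Hs.
  apply (is_derive_plus (fun y => p * gauss y mu1 (sigma ^ 2))
                        (fun y => (1 - p) * gauss y mu2 (sigma ^ 2)));
    apply is_derive_scal, is_derive_gauss, pow_nonzero, Hs.
Qed.

(* Posterior probability of the first component, for prior weight [p] and
   log-likelihood ratio [u] of the second component against the first. *)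
Definition responsibility (p u : R) : R := p / (p + (1 - p) * exp u).

Lemma score_mix2 (p mu1 mu2 sigma x : R) : 0 < p < 1 -> 0 < sigma ->
  score (mix2 p mu1 mu2 sigma) x =
    (mu2 - x) / sigma ^ 2
    - responsibility p ((mu2 - mu1) / sigma ^ 2 * (x - (mu1 + mu2) / 2))
      * ((mu2 - mu1) / sigma ^ 2).
Proof.
  intros Hp Hs.
  assert (Hs2 : 0 < sigma ^ 2) by (apply pow_lt; exact Hs).
  assert (Hg1 := gauss_pos x mu1 _ Hs2). assert (Hg2 := gauss_pos x mu2 _ Hs2).
  assert (Hmix : 0 < mix2 p mu1 mu2 sigma x) by (unfold mix2; nra).
  rewrite (score_eq_derive_div _ _ _ Hmix (is_derive_mix2 p mu1 mu2 sigma x ltac:(lra))).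
  unfold mix2, responsibility. rewrite (gauss_ratio x mu1 mu2 (sigma ^ 2)) by lra.
  set (e := exp _). assert (He : 0 < e) by apply exp_pos.
  assert (Hw : 0 < p + (1 - p) * e) by nra.
  field. repeat split; nra.
Qed.

Lemma responsibility_bounds (p u : R) : 0 < p < 1 ->
  0 <= responsibility p u <= exp (- u) / (1 - p).
Proof.
  intros Hp. unfold responsibility. rewrite exp_Ropp.
  assert (He := exp_pos u). set (e := exp u) in *.
  assert (Hden : 0 < p + (1 - p) * e) by nra.
  split; [apply Rlt_le, Rdiv_lt_0_compat; lra|].
  apply Rle_div_l; [exact Hden|].
  replace (/ e / (1 - p) * (p + (1 - p) * e)) with (p / ((1 - p) * e) + 1)
    by (field; lra).
  assert (0 < p / ((1 - p) * e)) by (apply Rdiv_lt_0_compat; nra).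
  lra.
Qed.

Lemma one_sub_responsibility (p u : R) : 0 < p < 1 ->
  1 - responsibility p u = responsibility (1 - p) (- u).
Proof.
  intros Hp. unfold responsibility. rewrite exp_Ropp.
  assert (He := exp_pos u).
  field. split; nra.
Qed.

Lemma Rabs_responsibility_sub_le_nonneg (p q u : R) :
  0 < p < 1 -> 0 < q < 1 -> 0 <= u ->
  Rabs (responsibility p u - responsibility q u) <= (/ (1 - p) + / (1 - q)) * exp (- u).
Proof.
  intros Hp Hq Hu.
  destruct (responsibility_bounds p u Hp), (responsibility_bounds q u Hq).
  replace ((/ (1 - p) + / (1 - q)) * exp (- u))
    with (exp (- u) / (1 - p) + exp (- u) / (1 - q)) by (field; lra).
  apply Rabs_le. lra.
Qed.

Lemma Rabs_responsibility_sub_le (p q u : R) : 0 < p < 1 -> 0 < q < 1 ->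
  Rabs (responsibility p u - responsibility q u)
    <= (/ p + / (1 - p) + / q + / (1 - q)) * exp (- Rabs u).
Proof.
  intros Hp Hq.
  assert (0 < / p) by (apply Rinv_0_lt_compat; lra).
  assert (0 < / q) by (apply Rinv_0_lt_compat; lra).
  assert (0 < / (1 - p)) by (apply Rinv_0_lt_compat; lra).
  assert (0 < / (1 - q)) by (apply Rinv_0_lt_compat; lra).
  destruct (Rle_or_lt 0 u) as [Hu | Hu].
  - rewrite (Rabs_pos_eq u Hu).
    eapply Rle_trans; [exact (Rabs_responsibility_sub_le_nonneg p q u Hp Hq Hu)|].
    apply Rmult_le_compat_r; [apply Rlt_le, exp_pos | lra].
  - rewrite (Rabs_left u Hu).
    replace (responsibility p u - responsibility q u)
      with ((1 - responsibility q u) - (1 - responsibility p u)) by ring.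
    rewrite (one_sub_responsibility p u Hp), (one_sub_responsibility q u Hq).
    eapply Rle_trans;
      [exact (Rabs_responsibility_sub_le_nonneg (1 - q) (1 - p) (- u)
                ltac:(lra) ltac:(lra) ltac:(lra))|].
    replace (1 - (1 - q)) with q by ring. replace (1 - (1 - p)) with p by ring.
    apply Rmult_le_compat_r; [apply Rlt_le, exp_pos | lra].
Qed.

Lemma sqr_div4_lt_exp (y : R) : 0 <= y -> y ^ 2 / 4 < exp y.
Proof.
  intros Hy.
  replace (exp y) with (exp (y / 2) * exp (y / 2))
    by (rewrite <- exp_plus; f_equal; field).
  pose proof (exp_ineq1_le (y / 2)). nra.
Qed.

Lemma mul_exp_neg_lt (t a : R) : 0 < t -> 0 < a ->
  t * exp (- (t * a)) < 4 / (t * a ^ 2).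
Proof.
  intros Ht Ha. rewrite exp_Ropp.
  assert (Hta : 0 < t * a ^ 2) by (apply Rmult_lt_0_compat; [exact Ht | apply pow_lt, Ha]).
  assert (Hexp := sqr_div4_lt_exp (t * a) ltac:(nra)).
  set (E := exp (t * a)) in *. assert (HE : 0 < E) by apply exp_pos.
  assert (Hgap : 4 / (t * a ^ 2) - t * / E = 4 * (E - (t * a) ^ 2 / 4) / (t * a ^ 2 * E))
    by (field; lra).
  assert (0 < 4 * (E - (t * a) ^ 2 / 4) / (t * a ^ 2 * E))
    by (apply Rdiv_lt_0_compat; nra).
  lra.
Qed.

Lemma score_mix2_sub (p q mu1 mu2 sigma x : R) : 0 < p < 1 -> 0 < q < 1 -> 0 < sigma ->
  let t := (mu2 - mu1) / sigma ^ 2 in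
  score (mix2 p mu1 mu2 sigma) x - score (mix2 q mu1 mu2 sigma) x =
    (responsibility q (t * (x - (mu1 + mu2) / 2))
     - responsibility p (t * (x - (mu1 + mu2) / 2))) * t.
Proof. intros Hp Hq Hs t. subst t. rewrite !score_mix2 by assumption. ring. Qed.

Lemma Rabs_score_mix2_sub_lt (p q mu1 mu2 sigma delta : R) :
  0 < p < 1 -> 0 < q < 1 -> 0 < sigma -> mu1 < mu2 -> delta <> 0 ->
  let t := (mu2 - mu1) / sigma ^ 2 in
  let x := (mu1 + mu2) / 2 + delta in
  Rabs (score (mix2 p mu1 mu2 sigma) x - score (mix2 q mu1 mu2 sigma) x)
    < (/ q + / (1 - q) + / p + / (1 - p)) * (4 / (t * delta ^ 2)).
Proof.
  intros Hp Hq Hs H12 Hd t x.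
  assert (Ht : 0 < t) by (apply Rdiv_lt_0_compat; [lra | apply pow_lt, Hs]).
  rewrite (score_mix2_sub p q mu1 mu2 sigma x Hp Hq Hs). fold t.
  replace (x - (mu1 + mu2) / 2) with delta by (unfold x; ring).
  rewrite Rabs_mult, (Rabs_pos_eq t) by (apply Rlt_le, Ht).
  pose proof (Rabs_responsibility_sub_le q p (t * delta) Hq Hp) as Hresp.
  rewrite Rabs_mult, (Rabs_pos_eq t) in Hresp by (apply Rlt_le, Ht).
  pose proof (mul_exp_neg_lt t (Rabs delta) Ht (Rabs_pos_lt _ Hd)) as Htail.
  rewrite pow2_abs in Htail.
  set (C := / q + / (1 - q) + / p + / (1 - p)) in *.
  assert (HC : 0 < C)
    by (unfold C; repeat apply Rplus_lt_0_compat; apply Rinv_0_lt_compat; lra).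
  apply Rle_lt_trans with (C * exp (- (t * Rabs delta)) * t).
  - apply Rmult_le_compat_r; [lra | exact Hresp].
  - rewrite Rmult_assoc, (Rmult_comm (exp _)).
    apply Rmult_lt_compat_l; [exact HC | exact Htail].
Qed.

Theorem lemma2 (pi1 pi1' delta : R) :
  0 < pi1 < 1 -> 0 < pi1' < 1 -> delta <> 0 ->
  forall eps : R, 0 < eps ->
  exists K : R, 0 < K /\
    forall mu1 mu2 sigma : R, mu1 < mu2 -> 0 < sigma ->
      (mu1 - mu2) / sigma ^ 2 < - K ->
      let x := (mu1 + mu2) / 2 + delta in
      Rabs (score (mix2 pi1 mu1 mu2 sigma) x
            - score (mix2 pi1' mu1 mu2 sigma) x) < eps.
Proof.
  intros Hp Hp' Hd eps Heps.
  set (C := / pi1' + / (1 - pi1') + / pi1 + / (1 - pi1)).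
  assert (HC : 0 < C)
    by (unfold C; repeat apply Rplus_lt_0_compat; apply Rinv_0_lt_compat; lra).
  assert (Hd2 : 0 < delta ^ 2) by (apply pow2_gt_0, Hd).
  exists (4 * C / (eps * delta ^ 2)).
  split; [apply Rdiv_lt_0_compat; nra|].
  intros mu1 mu2 sigma H12 Hs Hsep x.
  eapply Rlt_trans;
    [exact (Rabs_score_mix2_sub_lt pi1 pi1' mu1 mu2 sigma delta Hp Hp' Hs H12 Hd)|].
  fold C. set (t := (mu2 - mu1) / sigma ^ 2).
  assert (Ht : 4 * C < t * (eps * delta ^ 2)).
  { apply Rlt_div_l; [nra|].
    replace t with (- ((mu1 - mu2) / sigma ^ 2)) by (unfold t; field; lra). lra. }
  replace (C * (4 / (t * delta ^ 2))) with (4 * C / (t * delta ^ 2))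
    by (field; split; [exact Hd | intros ->; lra]).
  apply Rlt_div_l; nra.
Qed.
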